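(* Let $\mathbf P=UV^\top$ be the transition matrix of a Markov chain on $\{1,\dots,p\}$ with stationary distribution $\pi$ having all entries positive, where $U,V\in\mathbb R^{p\times r}$ are entrywise nonnegative with $U\mathbf 1_r=\mathbf 1_p$, $V^\top\mathbf 1_p=\mathbf 1_r$, each meta-state has an anchor state, and $\mathrm{rank}(U)=r$. Let $\mathbf H=[\mathbf h_1,\dots,\mathbf h_r]$ contain the right singular vectors of $\mathbf Q=\mathrm{diag}(\pi)\mathbf P[\mathrm{diag}(\pi)]^{-1/2}$ associated with its nonzero singular values. Then there exists a simplicial cone in $\mathbb R^r$ with $r$ extreme rays such that all rows of $\mathbf H$ are contained in this simplicial cone. Furthermore, for all anchor states $j$ of a meta-state, the $j$-th row of $\mathbf H$ lies exactly on one extreme ray of this simplicial cone.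
   Context: A state $j$ is an anchor state of meta-state $k$ if $V_{jk}>0$ and $V_{js}=0$ for all $s\neq k$. A simplicial cone in $\mathbb R^r$ with $r$ extreme rays is a set $\{\sum_{k=1}^ra_k\boldsymbol\ell_k: a_k\ge0\}$ for linearly independent $\boldsymbol\ell_1,\dots,\boldsymbol\ell_r\in\mathbb R^r$, its extreme rays being $\{a\boldsymbol\ell_k:a\ge0\}$. *)

From HB Require Import structures.
From mathcomp Require Import all_boot all_order all_algebra.
From mathcomp Require Import reals.
Set Implicit Arguments. Unset Strict Implicit. Unset Printing Implicit Defensive.
Import Order.TTheory GRing.Theory Num.Theory.
Local Open Scope ring_scope.

Definition stationary_dist (R : realType) (p : nat) (P : 'M[R]_p) (pi : 'rV[R]_p) : Prop :=
  (forall j, 0 <= pi 0 j) /\ \sum_j pi 0 j = 1 /\ pi *m P = pi.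

Definition anchor_state (R : realType) (p r : nat) (V : 'M[R]_(p, r)) (j : 'I_p) (k : 'I_r) : Prop :=
  0 < V j k /\ forall s, s != k -> V j s = 0.

Definition Qmat (R : realType) (p : nat) (P : 'M[R]_p) (pi : 'rV[R]_p) : 'M[R]_p :=
  diag_mx pi *m P *m diag_mx (map_mx (fun x => (Num.sqrt x)^-1) pi).

(* The columns of H are the right singular vectors of Q associated with its
   nonzero singular values: Q = W diag(sigma) H^T is a compact SVD, with
   orthonormal columns in W and H and positive singular values sigma. *)
Definition right_sing_vectors_nonzero (R : realType) (p r : nat) (Q : 'M[R]_p) (H : 'M[R]_(p, r)) : Prop :=
  exists (W : 'M[R]_(p, r)) (sigma : 'rV[R]_r),
    W^T *m W = 1%:M /\ H^T *m H = 1%:M /\ (forall k, 0 < sigma 0 k) /\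
    Q = W *m diag_mx sigma *m H^T.

Definition in_simplicial_cone (R : realType) (r : nat) (L : 'M[R]_r) (x : 'rV[R]_r) : Prop :=
  exists a : 'rV[R]_r, (forall k, 0 <= a 0 k) /\ x = a *m L.

Definition on_extreme_ray (R : realType) (r : nat) (L : 'M[R]_r) (k : 'I_r) (x : 'rV[R]_r) : Prop :=
  exists a : R, 0 <= a /\ x = a *: row k L.

From HB Require Import structures.
From mathcomp Require Import all_boot all_order all_algebra.
From mathcomp Require Import reals.
Set Implicit Arguments. Unset Strict Implicit. Unset Printing Implicit Defensive.
Import Order.TTheory GRing.Theory Num.Theory.
Local Open Scope ring_scope.

(* Transposing the compact SVD [Q = W S H^T] gives [Q^T W = H S], so
   [H = D V L] with [D = diag(pi)^{-1/2}] and [L = U^T diag(pi) W S^{-1}].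
   Row j of H is thus [D_jj (row j V) L]: a nonnegative combination of the rows
   of L, and a positive multiple of the single row k of L when j is an anchor
   of k.  Since H has orthonormal columns, [H^T D V] is a left inverse of L,
   so L is invertible and its rows span a simplicial cone. *)

Section FieldMatrices.

Variable F : fieldType.

Lemma diag_mx_mulV (n : nat) (d : 'rV[F]_n) :
  (forall k, d 0 k != 0) -> diag_mx d *m diag_mx (map_mx GRing.inv d) = 1%:M.
Proof.
move=> d_neq0; rewrite mulmx_diag; apply/matrixP => i j; rewrite !mxE.
by case: eqP => [->|]; rewrite ?mulr0n ?mulr1n // mulfV.
Qed.

Lemma svd_right_vectorsE (m n r : nat) (Q : 'M[F]_(m, n)) (W : 'M_(m, r))
    (sigma : 'rV_r) (H : 'M_(n, r)) :
  W^T *m W = 1%:M -> (forall k, sigma 0 k != 0) ->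
  Q = W *m diag_mx sigma *m H^T ->
  H = Q^T *m W *m diag_mx (map_mx GRing.inv sigma).
Proof.
move=> WW sigma_neq0 ->.
rewrite !trmx_mul trmxK tr_diag_mx !mulmxA -(mulmxA _ W^T) WW mulmx1.
by rewrite -mulmxA diag_mx_mulV // mulmx1.
Qed.

Lemma row_diag_mul (m n : nat) (d : 'rV[F]_m) (A : 'M_(m, n)) (j : 'I_m) :
  row j (diag_mx d *m A) = d 0 j *: row j A.
Proof. by rewrite row_mul row_diag_mx -scalemxAl -rowE. Qed.

Lemma scale_row_free_inj (m n : nat) (L : 'M[F]_(m, n)) (k k' : 'I_m) (a b : F) :
  row_free L -> a != 0 -> a *: row k L = b *: row k' L -> k = k'.
Proof.
move=> freeL a_neq0; rewrite !rowE !scalemxAl => /(row_free_inj freeL).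
move/rowP/(_ k); rewrite !mxE !eqxx mulr1.
by case: (eqVneq k k') => // _; rewrite mulr0 => /eqP; rewrite (negbTE a_neq0).
Qed.

End FieldMatrices.

Section MetaStates.

Variables (R : realType) (p r : nat).
Implicit Types (U V H : 'M[R]_(p, r)) (pi : 'rV[R]_p).

Definition inv_sqrt_dist pi : 'rV[R]_p := map_mx (fun x => (Num.sqrt x)^-1) pi.

Lemma trmx_Qmat (P : 'M[R]_p) pi :
  (Qmat P pi)^T = diag_mx (inv_sqrt_dist pi) *m P^T *m diag_mx pi.
Proof. by rewrite /Qmat !trmx_mul !tr_diag_mx mulmxA. Qed.

Lemma right_sing_vectors_factor U V pi H :
  right_sing_vectors_nonzero (Qmat (U *m V^T) pi) H ->
  exists2 L : 'M[R]_r, row_free L & H = diag_mx (inv_sqrt_dist pi) *m V *m L.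
Proof.
move=> [W [sigma [WW [HH [sigma_gt0 EQ]]]]].
set L := U^T *m diag_mx pi *m W *m diag_mx (map_mx GRing.inv sigma).
have EH : H = diag_mx (inv_sqrt_dist pi) *m V *m L.
  rewrite (svd_right_vectorsE WW _ EQ) => [|k]; last by rewrite gt_eqF.
  by rewrite trmx_Qmat trmx_mul trmxK /L !mulmxA.
exists L => //.
by move: HH; rewrite {2}EH mulmxA row_free_unit => /mulmx1_unit[_].
Qed.

Lemma anchor_rowE V (j : 'I_p) (k : 'I_r) :
  anchor_state V j k -> row j V = V j k *: 'e_k.
Proof.
move=> [_ V_eq0]; apply/rowP => s; rewrite !mxE.
by case: (eqVneq s k) => [->|/V_eq0->]; rewrite ?mulr1 ?mulr0.
Qed.

End MetaStates.

Theorem mainTheorem13 (R : realType) (p r : nat)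
  (U V : 'M[R]_(p, r)) (pi : 'rV[R]_p) (H : 'M[R]_(p, r)) :
  (forall i k, 0 <= U i k) -> (forall i k, 0 <= V i k) ->
  U *m const_mx 1 = const_mx 1 :> 'cV[R]_p ->
  V^T *m const_mx 1 = const_mx 1 :> 'cV[R]_r ->
  stationary_dist (U *m V^T) pi ->
  (forall j, 0 < pi 0 j) ->
  (forall k, exists j, anchor_state V j k) ->
  \rank U = r ->
  right_sing_vectors_nonzero (Qmat (U *m V^T) pi) H ->
  exists L : 'M[R]_r,
    row_free L /\
    (forall j : 'I_p, in_simplicial_cone L (row j H)) /\
    (forall (j : 'I_p) (k : 'I_r), anchor_state V j k ->
       exists! k' : 'I_r, on_extreme_ray L k' (row j H)).
Proof.
move=> _ V_ge0 _ _ _ pi_gt0 _ _ /right_sing_vectors_factor[L freeL EH].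
set d := inv_sqrt_dist pi.
have d_gt0 j : 0 < d 0 j by rewrite mxE invr_gt0 sqrtr_gt0.
have rowH j : row j H = (d 0 j *: row j V) *m L by rewrite EH row_mul row_diag_mul.
exists L; split=> //; split=> [j | j k anchor_jk].
  exists (d 0 j *: row j V); split=> [k|]; last exact: rowH.
  by rewrite mxE mulr_ge0 ?(ltW (d_gt0 j)) // mxE.
have rowHj : row j H = (d 0 j * V j k) *: row k L.
  by rewrite rowH (anchor_rowE anchor_jk) scalerA -scalemxAl -rowE.
have c_gt0 : 0 < d 0 j * V j k by rewrite mulr_gt0 //; case: anchor_jk.
exists k; split=> [|k' [a [_ Ea]]]; first by exists (d 0 j * V j k); rewrite ltW.
by apply: (scale_row_free_inj freeL (lt0r_neq0 c_gt0)); rewrite -rowHj; exact: Ea.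
Qed.
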